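(* Let $\mathbf{X}^{(1)}$ and $\mathbf{X}^{(2)}$ be $p$-variate random vectors with absolutely continuous distributions (populations $\Pi^{(1)}$, $\Pi^{(2)}$, with prior probabilities $\pi_1,\pi_2$), fix a unit vector $\mathbf{u}\in\mathbb{R}^p$, and let $Q_Z^{(k)}(\theta;\mathbf{u})$ be the $\theta$-quantile of $Z^{(k)}=\mathbf{u}^{\top}\mathbf{X}^{(k)}$. For $\theta\in(0,1)$ let $Q_{\alpha}(\theta;\mathbf{u})=\min_k Q_Z^{(k)}(\theta;\mathbf{u})$ and $Q_{\beta}(\theta;\mathbf{u})=\max_k Q_Z^{(k)}(\theta;\mathbf{u})$, with $G_\alpha,g_\alpha,\pi_\alpha$ (resp. $G_\beta,g_\beta,\pi_\beta$) the distribution function, density and prior probability of the population attaining the minimum (resp. maximum), and let $\tilde Q(\theta;\mathbf{u})=\theta Q_\alpha(\theta;\mathbf{u})+(1-\theta)Q_\beta(\theta;\mathbf{u})$. Assume that the density functions $g_\alpha(z;\mathbf{u})$ and $g_\beta(z;\mathbf{u})$ exist and are nonzero on the same compact domain $\mathcal{Z}$. Further assume that there is a point $z_0$ with $\pi_\alpha g_\alpha(z_0;\mathbf{u})=\pi_\beta g_\beta(z_0;\mathbf{u})$ such that $\pi_\alpha g_\alpha(z;\mathbf{u})>\pi_\beta g_\beta(z;\mathbf{u})$ for $z$ on one side of $z_0$ and $\pi_\alpha g_\alpha(z;\mathbf{u})<\pi_\beta g_\beta(z;\mathbf{u})$ for $z$ on the other side of $z_0$. Then the directional quantile classifier using the quantile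 $\tilde Q(\theta;\mathbf{u})$ with $\theta$ chosen to minimise the theoretical misclassification probability $$1-\psi(\theta)=\pi_\alpha\{1-G_\alpha(\tilde Q(\theta;\mathbf{u});\mathbf{u})\}+\pi_\beta G_\beta(\tilde Q(\theta;\mathbf{u});\mathbf{u})$$ achieves the optimal Bayes misclassification probability (for classifying on the basis of the projected observation).
   Context: The directional quantile classifier at level $\theta$ and direction $\mathbf{u}$ assigns $\mathbf{y}$ to $\Pi^{(1)}$ if $\Phi^{(2)}(\theta;\mathbf{u}^{\top}\mathbf{y})-\Phi^{(1)}(\theta;\mathbf{u}^{\top}\mathbf{y})>0$ and to $\Pi^{(2)}$ otherwise, where $\Phi^{(k)}(\theta;z)=\{\theta+(1-2\theta)I(z-Q_Z^{(k)}(\theta;\mathbf{u})<0)\}\,|z-Q_Z^{(k)}(\theta;\mathbf{u})|$; equivalently it assigns $z=\mathbf{u}^{\top}\mathbf{y}$ to the population attaining $Q_\alpha$ when $z<\tilde Q(\theta;\mathbf{u})$ and to the other population otherwise, and $1-\psi(\theta)$ is its misclassification probability. *)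

From HB Require Import structures.
From mathcomp Require Import all_boot all_order all_algebra.
From mathcomp Require Import all_classical all_reals all_analysis.
Set Implicit Arguments. Unset Strict Implicit. Unset Printing Implicit Defensive.
Import Order.TTheory GRing.Theory Num.Theory.
Local Open Scope classical_set_scope.
Local Open Scope ring_scope.

Definition proj_obs {R : realType} {T : Type} (p : nat) (u : 'rV[R]_p)
  (X : 'I_p -> T -> R) : T -> R :=
  fun t => \sum_(i < p) u ord0 i * X i t.

Definition distr_fun {R : realType} {d} {T : measurableType d} (P : probability T R)
  (Z : T -> R) (z : R) : R := fine (P [set t | Z t <= z]).

Definition quantile {R : realType} (G : R -> R) (theta : R) : R :=
  inf [set z | theta <= G z].

Definition Qtilde {R : realType} (G1 G2 : R -> R) (theta : R) : R :=
  let q1 := quantile G1 theta in let q2 := quantile G2 theta in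
  theta * Num.min q1 q2 + (1 - theta) * Num.max q1 q2.

(* Theoretical misclassification probability 1 - psi(theta) of the directional
   quantile classifier:
     pi_alpha (1 - G_alpha(Qt)) + pi_beta G_beta(Qt),
   where alpha is the population attaining the minimal theta-quantile
   (ties broken in favour of population 1). *)
Definition dq_misclass {R : realType} (pi1 pi2 : R) (G1 G2 : R -> R)
  (theta : R) : R :=
  let Qt := Qtilde G1 G2 theta in
  if quantile G1 theta <= quantile G2 theta
  then pi1 * (1 - G1 Qt) + pi2 * G2 Qt
  else pi2 * (1 - G2 Qt) + pi1 * G1 Qt.

(* Optimal Bayes misclassification probability for classifying on the basis of
   the projected observation z: infimum, over all (Borel) classification
   regions A (assign z to Pi^(1) iff z \in A), of
     pi1 P(Z^(1) \notin A) + pi2 P(Z^(2) \in A). *)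
Definition bayes_misclass {R : realType} {d1 d2}
  {T1 : measurableType d1} {T2 : measurableType d2}
  (pi1 pi2 : R) (P1 : probability T1 R) (Z1 : T1 -> R)
  (P2 : probability T2 R) (Z2 : T2 -> R) : R :=
  inf [set r | exists A : set R, measurable A /\
     r = pi1 * fine (P1 (Z1 @^-1` (~` A))) + pi2 * fine (P2 (Z2 @^-1` A))].

From HB Require Import structures.
From mathcomp Require Import all_boot all_order all_algebra.
From mathcomp Require Import all_classical all_reals all_analysis.
From mathcomp Require Import measurable_realfun lra.
Set Implicit Arguments.
Unset Strict Implicit.
Unset Printing Implicit Defensive.
Import Order.TTheory GRing.Theory Num.Theory numFieldNormedType.Exports.
Local Open Scope classical_set_scope.
Local Open Scope ring_scope.

(* Both projected distribution functions are continuous and strictly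
   increasing on the common support [a, b], so each theta-quantile is the
   unique root of G_k(q) = theta and depends continuously on theta.  A region
   on which pi1 g1 >= pi2 g2, and off which the reverse holds, minimises
   pi1 P(Z1 \notin A) + pi2 P(Z2 \in A) over all Borel A; under the
   single-crossing hypothesis the half-line cut at z0, or its complement, is
   such a region.  The quantile classifier at level theta misclassifies
   exactly like the half-line cut at Qtilde(theta); Qtilde is continuous, below
   z0 for small theta and above z0 for theta close to 1, so the intermediate
   value theorem yields a theta with Qtilde(theta) = z0.  At that theta the
   population whose weighted density dominates left of z0 has the smaller
   quantile: otherwise comparing weighted lower tails at one quantile and
   weighted upper tails at the other would give both pi_k > pi_l and
   pi_k < pi_l. *)

Section Rintegral_compare.
Context {R : realType}.
Local Notation mu := (@lebesgue_measure R).

Lemma integral_itv_gt0 (f : R -> R) (x y : R) : x < y ->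
  measurable_fun [set` `]x, y[] f -> (forall z, x < z < y -> 0 < f z) ->
  (0 < \int[mu]_(z in `]x, y[) (f z)%:E)%E.
Proof.
move=> xy mf f_gt0.
have f_ge0 z : [set` `]x, y[] z -> (0 <= (f z)%:E)%E.
  by rewrite /= in_itv /= lee_fin => /f_gt0/ltW.
rewrite lt0e integral_ge0 // andbT; apply/eqP => int0.
have [N [mN N0 fN]] : ae_eq mu [set` `]x, y[] (EFin \o f) (cst 0%E).
  have [+ _] := ae_eq_integral_abs mu (measurable_itv `]x, y[)
    ((measurable_EFinP _ _).2 mf).
  apply; rewrite -int0; apply: eq_integral => z /set_mem xyz /=.
  by rewrite ger0_norm // -lee_fin f_ge0.
have : (mu `]x, y[ <= mu N)%E.
  apply: le_measure; rewrite ?inE // => z xyz; apply: fN => /(_ xyz) /=.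
  by move: xyz; rewrite /= in_itv /= => /f_gt0; rewrite -lte_fin => /gt_eqF/eqP.
rewrite N0 lebesgue_measure_itv /= lte_fin xy -EFinB lee_fin subr_le0.
by rewrite leNgt xy.
Qed.

Lemma Rintegral_gt0 (f : R -> R) (D : set R) (x y : R) :
  measurable D -> mu.-integrable D (EFin \o f) ->
  (forall z, D z -> 0 <= f z) -> `]x, y[ `<=` D -> x < y ->
  (forall z, x < z < y -> 0 < f z) ->
  0 < \int[mu]_(z in D) f z.
Proof.
move=> mD intf f_ge0 sD xy f_gt0.
have mf : measurable_fun D f by apply/measurable_EFinP; case/integrableP: intf.
have int_xy_gt0 := integral_itv_gt0 xy (measurable_funS mD sD mf) f_gt0.
have /fin_numPlt/andP[_ int_lty] := @integrable_fin_num _ _ _ mu D mD _ intf.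
rewrite /Rintegral fine_gt0 // int_lty andbT (lt_le_trans int_xy_gt0) //.
by apply: ge0_subset_integral => //; exact/measurable_EFinP.
Qed.

Lemma integrable_scale (k : R) (f : R -> R) (D : set R) :
  measurable D -> mu.-integrable D (EFin \o f) ->
  mu.-integrable D (EFin \o (fun z => k * f z)).
Proof.
move=> mD intf; have := integrableZl _ k intf.
by move=> /(_ mD); apply: eq_integrable.
Qed.

Lemma ler_Rintegral_scale (k1 k2 : R) (f1 f2 : R -> R) (D : set R) :
  measurable D -> mu.-integrable D (EFin \o f1) ->
  mu.-integrable D (EFin \o f2) ->
  (forall z, D z -> k1 * f1 z <= k2 * f2 z) ->
  k1 * \int[mu]_(z in D) f1 z <= k2 * \int[mu]_(z in D) f2 z.
Proof.
move=> mD int1 int2 f12; rewrite -!RintegralZl //.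
by apply: le_Rintegral => //; exact: integrable_scale.
Qed.

Lemma ltr_Rintegral_scale (k1 k2 : R) (f1 f2 : R -> R) (D : set R) (x y : R) :
  measurable D -> mu.-integrable D (EFin \o f1) ->
  mu.-integrable D (EFin \o f2) ->
  (forall z, D z -> k1 * f1 z <= k2 * f2 z) -> `]x, y[ `<=` D -> x < y ->
  (forall z, x < z < y -> k1 * f1 z < k2 * f2 z) ->
  k1 * \int[mu]_(z in D) f1 z < k2 * \int[mu]_(z in D) f2 z.
Proof.
move=> mD int1 int2 f12 sD xy f12_lt.
have intk1 := integrable_scale k1 mD int1.
have intk2 := integrable_scale k2 mD int2.
rewrite -subr_gt0 -!RintegralZl // -RintegralB //.
apply: (Rintegral_gt0 mD _ _ sD xy).
- have := integrableB _ intk2 intk1.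
  by move=> /(_ mD); apply: eq_integrable => // z _ /=; rewrite EFinB.
- by move=> z /f12; rewrite subr_ge0.
- by move=> z /f12_lt; rewrite subr_gt0.
Qed.

Lemma Rintegral_setIC (f : R -> R) (S B : set R) :
  measurable S -> measurable B -> mu.-integrable S (EFin \o f) ->
  \int[mu]_(z in S) f z =
  \int[mu]_(z in S `&` B) f z + \int[mu]_(z in S `&` ~` B) f z.
Proof.
move=> mS mB intf; rewrite -Rintegral_setU.
- by rewrite -setIUr setUCr setIT.
- exact: measurableI.
- exact: measurableI mS (measurableC mB).
- by rewrite -setIUr setUCr setIT.
- by rewrite disj_set2E setIACA setICr setI0.
Qed.

End Rintegral_compare.

Section quantile.
Context {R : realType}.

Lemma mem_lbound_inf (E : set R) (x : R) : E x -> lbound E x -> inf E = x.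
Proof.
move=> Ex lbx; apply/eqP; rewrite eq_le; apply/andP; split.
  by apply: (ge_inf _ Ex); exists x.
by apply: lb_le_inf => //; exists x.
Qed.

Lemma quantile_eq (G : R -> R) (t x : R) :
  G x = t -> (forall z, z < x -> G z < t) -> quantile G t = x.
Proof.
move=> Gx G_lt; apply: mem_lbound_inf => [|y /= tGy]; first by rewrite /= Gx.
by rewrite leNgt; apply/negP => /G_lt; rewrite ltNge tGy.
Qed.

Lemma Qtilde_ge_min (G1 G2 : R -> R) (t : R) : 0 <= t -> t <= 1 ->
  Num.min (quantile G1 t) (quantile G2 t) <= Qtilde G1 G2 t.
Proof.
move=> t_ge0 t_le1; rewrite /Qtilde minEle maxEle.
by case: (leP (quantile G1 t)) => q12; nra.
Qed.

Lemma Qtilde_le_max (G1 G2 : R -> R) (t : R) : 0 <= t -> t <= 1 ->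
  Qtilde G1 G2 t <= Num.max (quantile G1 t) (quantile G2 t).
Proof.
move=> t_ge0 t_le1; rewrite /Qtilde minEle maxEle.
by case: (leP (quantile G1 t)) => q12; nra.
Qed.

Lemma QtildeC (G1 G2 : R -> R) : Qtilde G1 G2 = Qtilde G2 G1.
Proof. by apply/funext => t; rewrite /Qtilde minC maxC. Qed.

Lemma Qtilde_continuous (G1 G2 : R -> R) (A : set R) :
  {within A, continuous (quantile G1)} ->
  {within A, continuous (quantile G2)} ->
  {within A, continuous (Qtilde G1 G2)}.
Proof.
move=> cq1 cq2 t.
have cid : {within A, continuous id}.
  by apply: continuous_subspaceT => s; exact: cvg_id.
have c1 : {within A, continuous (cst (1 : R))}.
  by apply: continuous_subspaceT => s; exact: cvg_cst.
exact: (continuousD (continuousM (cid t) (continuous_min (cq1 t) (cq2 t)))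
  (continuousM (continuousB (c1 t) (cid t)) (continuous_max (cq1 t) (cq2 t)))).
Qed.

End quantile.

Section density.
Context {R : realType}.
Local Notation mu := (@lebesgue_measure R).

Definition density_on (g : R -> R) (a b : R) : Prop :=
  [/\ a < b, measurable_fun setT g, (forall z, a <= z <= b -> 0 < g z),
      (forall z, ~ (a <= z <= b) -> g z = 0) &
      (\int[mu]_(z in setT) (g z)%:E = 1)%E].

Definition density_cdf (g : R -> R) (z : R) : R :=
  \int[mu]_(t in [set` `]-oo, z]]) g t.

Variables (g : R -> R) (a b : R).
Hypothesis dg : density_on g a b.

Lemma density_eq0 z : ~ (a <= z <= b) -> g z = 0.
Proof. by case: dg => _ _ _ + _; apply. Qed.

Lemma density_ge0 z : 0 <= g z.
Proof.
have [_ _ g_gt0 _ _] := dg.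
have [/g_gt0/ltW //|/negP zab] := boolP (a <= z <= b).
by rewrite density_eq0.
Qed.

Lemma density_integrable D : measurable D -> mu.-integrable D (EFin \o g).
Proof.
move=> mD; case: dg => _ mg _ _ g1; apply/integrableP; split.
  apply/measurable_EFinP.
  exact: (measurable_funS measurableT (@subsetT _ _) mg).
apply: (@le_lt_trans _ _ (\int[mu]_(z in setT) (g z)%:E)%E).
  2: by rewrite g1 ltey.
under eq_integral do rewrite /= ger0_norm ?density_ge0 //.
apply: ge0_subset_integral => //; first exact/measurable_EFinP.
by move=> z _; rewrite lee_fin density_ge0.
Qed.

Lemma density_setT : \int[mu]_(z in setT) g z = 1.
Proof. by case: dg => _ _ _ _ g1; rewrite /Rintegral g1. Qed.

Lemma density_setC A : measurable A ->
  \int[mu]_(z in ~` A) g z = 1 - \int[mu]_(z in A) g z.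
Proof.
move=> mA; rewrite -density_setT -(setUCr A) Rintegral_setU //.
- by rewrite [X in X - _]addrC addrK.
- exact: measurableC.
- by rewrite setUCr; exact: density_integrable.
- by rewrite disj_set2E setICr.
Qed.

Lemma density_setI_support D :
  \int[mu]_(z in D) g z = \int[mu]_(z in D `&` [set` `[a, b]]) g z.
Proof.
rewrite Rintegral_mkcondr; apply: eq_Rintegral => z _.
rewrite patchE; case: ifPn => // /negP zab; rewrite density_eq0 //.
by move=> zab'; apply: zab; rewrite inE /= in_itv.
Qed.

Lemma density_cdf_itv z : a <= z <= b ->
  density_cdf g z = \int[mu]_(t in [set` `[a, z]]) g t.
Proof.
move=> /andP[az zb]; rewrite /density_cdf density_setI_support; congr Rintegral.
apply/seteqP; split => w /=; rewrite !in_itv /=.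
  by case=> wz /andP[aw _]; rewrite aw wz.
by move=> /andP[aw wz]; rewrite aw wz (le_trans wz zb).
Qed.

Lemma density_cdf_left : density_cdf g a = 0.
Proof.
have ab : a < b by case: dg.
by rewrite density_cdf_itv ?lexx ?(ltW ab) // set_itv1 Rintegral_set1.
Qed.

Lemma density_cdf_right : density_cdf g b = 1.
Proof.
rewrite /density_cdf density_setI_support -density_setT.
rewrite (density_setI_support setT) setTI; congr Rintegral.
apply/seteqP; split => w /=; rewrite !in_itv /=; first by case.
by move=> /andP[-> ->].
Qed.

Lemma density_cdfB x y : x <= y ->
  density_cdf g y - density_cdf g x = \int[mu]_(t in [set` `]x, y]]) g t.
Proof.
move=> xy; apply: Rintegral_itvB; rewrite ?bnd_simp //.
by apply: density_integrable; exact: measurable_itv.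
Qed.

Lemma density_cdf_le : {homo density_cdf g : x y / x <= y}.
Proof.
move=> x y xy; rewrite -subr_ge0 density_cdfB //.
by apply: Rintegral_ge0 => z _; exact: density_ge0.
Qed.

Lemma density_cdf_lt x y : x < y -> a < y -> x < b ->
  density_cdf g x < density_cdf g y.
Proof.
move=> xy ay xb; have [ab _ g_gt0 _ _] := dg.
rewrite -subr_gt0 density_cdfB ?(ltW xy) //.
apply: (Rintegral_gt0 (x := Num.max x a) (y := Num.min y b)).
- exact: measurable_itv.
- by apply: density_integrable; exact: measurable_itv.
- by move=> z _; exact: density_ge0.
- move=> z /=; rewrite !in_itv /= gt_max lt_min.
  by move=> /andP[/andP[-> _] /andP[/ltW -> _]].
- by rewrite gt_max !lt_min xy xb ay ab.
- move=> z; rewrite gt_max lt_min => /andP[/andP[_ az] /andP[_ zb]].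
  by apply: g_gt0; rewrite !ltW.
Qed.

Lemma density_cdf_continuous : {within `[a, b], continuous (density_cdf g)}.
Proof.
have ab : a < b by case: dg.
have := parameterized_integral_continuous (ltW ab)
  (density_integrable (measurable_itv `[a, b])).
apply: subspace_eq_continuous => z /set_mem /= zab.
by rewrite /from_subspace /= density_cdf_itv.
Qed.

Lemma quantile_density_cdf_eq x : a < x < b ->
  quantile (density_cdf g) (density_cdf g x) = x.
Proof.
move=> /andP[ax xb]; apply: quantile_eq => // z zx.
exact: density_cdf_lt (lt_trans zx xb).
Qed.

Lemma quantile_density_cdf (t : R) : 0 < t < 1 ->
  a < quantile (density_cdf g) t < b /\
  density_cdf g (quantile (density_cdf g) t) = t.
Proof.
move=> /andP[t_gt0 t_lt1]; have ab : a < b by case: dg.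
have := IVT (ltW ab) density_cdf_continuous.
rewrite density_cdf_left density_cdf_right (min_idPl ler01) (max_idPr ler01).
move=> /(_ t); rewrite (ltW t_gt0) (ltW t_lt1) => -[] // x.
rewrite in_itv /= => /andP[ax xb] Gx.
have axb : a < x < b.
  rewrite !lt_neqAle ax xb !andbT; apply/andP; split; apply/eqP => ex.
    by move: Gx; rewrite -ex density_cdf_left => t0; rewrite t0 ltxx in t_gt0.
  by move: Gx; rewrite ex density_cdf_right => t1; rewrite t1 ltxx in t_lt1.
by rewrite -Gx quantile_density_cdf_eq.
Qed.

Lemma quantile_density_cdf_continuous (s t : R) : 0 < s -> s <= t -> t < 1 ->
  {within `[s, t], continuous (quantile (density_cdf g))}.
Proof.
move=> s_gt0 st t_lt1.
have s01 : 0 < s < 1 by rewrite s_gt0 (le_lt_trans st t_lt1).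
have t01 : 0 < t < 1 by rewrite (lt_le_trans s_gt0 st) t_lt1.
have [/andP[ax xb] Gx] := quantile_density_cdf s01.
have [/andP[ay yb] Gy] := quantile_density_cdf t01.
set x := quantile _ s in ax xb Gx; set y := quantile _ t in ay yb Gy.
have xy : x <= y.
  rewrite leNgt; apply/negP => yx.
  by have := density_cdf_lt yx ax yb; rewrite Gx Gy ltNge st.
have := segment_can_le_continuous (f := density_cdf g)
  (g := quantile (density_cdf g)) xy.
rewrite Gx Gy; apply.
  apply: continuous_subspaceW density_cdf_continuous => z /=.
  rewrite !in_itv /= => /andP[xz zy].
  by rewrite (le_trans (ltW ax) xz) (le_trans zy (ltW yb)).
move=> z; rewrite in_itv /= => /andP[xz zy]; apply: quantile_density_cdf_eq.
by rewrite (lt_le_trans ax xz) (le_lt_trans zy yb).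
Qed.

Lemma quantile_density_cdf_lt (t z : R) : 0 < t < 1 -> t < density_cdf g z ->
  quantile (density_cdf g) t < z.
Proof.
move=> t01 tz; rewrite ltNge; apply/negP => /density_cdf_le.
by have [_ ->] := quantile_density_cdf t01; rewrite leNgt tz.
Qed.

Lemma lt_quantile_density_cdf (t z : R) : 0 < t < 1 -> density_cdf g z < t ->
  z < quantile (density_cdf g) t.
Proof.
move=> t01 zt; rewrite ltNge; apply/negP => /density_cdf_le.
by have [_ ->] := quantile_density_cdf t01; rewrite leNgt zt.
Qed.

End density.

Lemma exists_Qtilde_eq {R : realType} (g1 g2 : R -> R) (a b z0 : R) :
  density_on g1 a b -> density_on g2 a b -> a < z0 < b ->
  exists2 t, 0 < t < 1 & Qtilde (density_cdf g1) (density_cdf g2) t = z0.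
Proof.
move=> dg1 dg2 /andP[az0 z0b].
have cdf_z0 g : density_on g a b -> 0 < density_cdf g z0 < 1.
  move=> dg; rewrite -{1}(density_cdf_left dg) -(density_cdf_right dg).
  by rewrite !(density_cdf_lt dg) // (lt_trans az0 z0b).
have /andP[y1_gt0 y1_lt1] := cdf_z0 _ dg1.
have /andP[y2_gt0 y2_lt1] := cdf_z0 _ dg2.
set y1 := density_cdf g1 z0 in y1_gt0 y1_lt1.
set y2 := density_cdf g2 z0 in y2_gt0 y2_lt1.
pose s := y1 * y2 / 2; pose t := 1 - (1 - y1) * (1 - y2) / 2.
have s01 : 0 < s < 1 by rewrite /s; apply/andP; split; nra.
have t01 : 0 < t < 1 by rewrite /t; apply/andP; split; nra.
have [s_gt0 s_lt1] := andP s01; have [t_gt0 t_lt1] := andP t01.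
have [s_y1 s_y2] : s < y1 /\ s < y2 by rewrite /s; split; nra.
have [y1_t y2_t] : y1 < t /\ y2 < t by rewrite /t; split; nra.
have st : s <= t by rewrite ltW // (lt_trans s_y1 y1_t).
have Qs : Qtilde (density_cdf g1) (density_cdf g2) s < z0.
  apply: le_lt_trans (Qtilde_le_max _ _ (ltW s_gt0) (ltW s_lt1)) _.
  by rewrite gt_max (quantile_density_cdf_lt dg1 s01 s_y1)
    (quantile_density_cdf_lt dg2 s01 s_y2).
have Qt : z0 < Qtilde (density_cdf g1) (density_cdf g2) t.
  apply: lt_le_trans (Qtilde_ge_min _ _ (ltW t_gt0) (ltW t_lt1)).
  by rewrite lt_min (lt_quantile_density_cdf dg1 t01 y1_t)
    (lt_quantile_density_cdf dg2 t01 y2_t).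
have := IVT st (Qtilde_continuous
  (quantile_density_cdf_continuous dg1 s_gt0 st t_lt1)
  (quantile_density_cdf_continuous dg2 s_gt0 st t_lt1)).
rewrite (min_idPl (ltW (lt_trans Qs Qt))) (max_idPr (ltW (lt_trans Qs Qt))).
move=> /(_ z0); rewrite (ltW Qs) (ltW Qt) => -[] // c; rewrite in_itv /=.
move=> /andP[sc ct] Qc; exists c => //.
by rewrite (lt_le_trans s_gt0 sc) (le_lt_trans ct t_lt1).
Qed.

Section misclassification.
Context {R : realType}.
Local Notation mu := (@lebesgue_measure R).

Definition misclass_cost (pi1 pi2 : R) (g1 g2 : R -> R) (A : set R) : R :=
  pi1 * \int[mu]_(z in ~` A) g1 z + pi2 * \int[mu]_(z in A) g2 z.

(* The observations that the directional quantile classifier assigns to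
   population 1; closing the half-line at Qtilde matches the G(Qtilde) terms
   of dq_misclass. *)
Definition dq_region (G1 G2 : R -> R) (t : R) : set R :=
  if quantile G1 t <= quantile G2 t then [set` `]-oo, Qtilde G1 G2 t]]
  else ~` [set` `]-oo, Qtilde G1 G2 t]].

Lemma measurable_dq_region (G1 G2 : R -> R) (t : R) :
  measurable (dq_region G1 G2 t).
Proof.
by rewrite /dq_region; case: ifP => _; [|apply: measurableC];
  exact: measurable_itv.
Qed.

Definition bayes_region (pi1 pi2 : R) (g1 g2 : R -> R) (B : set R) : Prop :=
  (forall z, B z -> pi2 * g2 z <= pi1 * g1 z) /\
  (forall z, ~ B z -> pi1 * g1 z <= pi2 * g2 z).

Lemma bayes_regionC (pi1 pi2 : R) (g1 g2 : R -> R) (B : set R) :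
  bayes_region pi2 pi1 g2 g1 B -> bayes_region pi1 pi2 g1 g2 (~` B).
Proof.
by case=> inB notinB; split=> z /=; [exact: notinB|rewrite notE; exact: inB].
Qed.

Variables (pi1 pi2 : R) (g1 g2 : R -> R) (a1 b1 a2 b2 : R).
Hypotheses (dg1 : density_on g1 a1 b1) (dg2 : density_on g2 a2 b2).

Lemma dq_misclass_cost t :
  dq_misclass pi1 pi2 (density_cdf g1) (density_cdf g2) t =
  misclass_cost pi1 pi2 g1 g2 (dq_region (density_cdf g1) (density_cdf g2) t).
Proof.
rewrite /dq_misclass /dq_region /misclass_cost; case: ifP => _.
  by rewrite (density_setC dg1) ?measurable_itv.
by rewrite setCK (density_setC dg2) ?measurable_itv // addrC.
Qed.

Lemma bayes_misclass_cost_le (B A : set R) :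
  measurable B -> bayes_region pi1 pi2 g1 g2 B -> measurable A ->
  misclass_cost pi1 pi2 g1 g2 B <= misclass_cost pi1 pi2 g1 g2 A.
Proof.
move=> mB [inB notinB] mA; rewrite /misclass_cost.
have mCA := measurableC mA; have mCB := measurableC mB.
have int1 := density_integrable dg1; have int2 := density_integrable dg2.
rewrite (Rintegral_setIC mCA mB (int1 _ mCA)).
rewrite (Rintegral_setIC mA mB (int2 _ mA)).
rewrite (Rintegral_setIC mCB mA (int1 _ mCB)).
rewrite (Rintegral_setIC mB mA (int2 _ mB)).
rewrite (setIC (~` B) A) (setIC (~` B) (~` A)) (setIC B A) (setIC B (~` A)).
have on_B : pi2 * \int[mu]_(z in ~` A `&` B) g2 z <=
            pi1 * \int[mu]_(z in ~` A `&` B) g1 z.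
  have mCAB : measurable (~` A `&` B) by exact: measurableI.
  apply: (ler_Rintegral_scale mCAB (int2 _ mCAB) (int1 _ mCAB)).
  by move=> z [_ /inB].
have off_B : pi1 * \int[mu]_(z in A `&` ~` B) g1 z <=
             pi2 * \int[mu]_(z in A `&` ~` B) g2 z.
  have mACB : measurable (A `&` ~` B) by exact: measurableI.
  apply: (ler_Rintegral_scale mACB (int1 _ mACB) (int2 _ mACB)).
  by move=> z [_ /notinB].
lra.
Qed.

End misclassification.

Section single_crossing.
Context {R : realType}.

Variables (k l : R) (g h : R -> R) (a b z0 : R).
Hypotheses (k_ge0 : 0 <= k) (l_ge0 : 0 <= l).
Hypotheses (dg : density_on g a b) (dh : density_on h a b).
Hypotheses (eq_z0 : k * g z0 = l * h z0)
  (lt_left : forall z, a <= z < z0 -> l * h z < k * g z)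
  (lt_right : forall z, z0 < z <= b -> k * g z < l * h z).

Lemma crossing_le_left z : z <= z0 -> l * h z <= k * g z.
Proof.
have [az|za] := leP a z.
  rewrite le_eqVlt => /predU1P[-> |zz0]; first by rewrite eq_z0.
  by apply/ltW/lt_left; rewrite az.
have zab : ~ (a <= z <= b) by rewrite leNgt za.
by rewrite (density_eq0 dg zab) (density_eq0 dh zab) !mulr0.
Qed.

Lemma crossing_le_right z : z0 < z -> k * g z <= l * h z.
Proof.
have [zb|bz] := leP z b; first by move=> z0z; apply/ltW/lt_right; rewrite z0z.
have zab : ~ (a <= z <= b) by rewrite [z <= b]leNgt bz andbF.
by rewrite (density_eq0 dg zab) (density_eq0 dh zab) !mulr0.
Qed.

Lemma crossing_bayes_region : bayes_region k l g h [set` `]-oo, z0]].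
Proof.
split=> z /=; rewrite in_itv /=; first exact: crossing_le_left.
by move=> /negP; rewrite -ltNge; exact: crossing_le_right.
Qed.

Lemma crossing_cdf_lt z : a < z <= z0 ->
  l * density_cdf h z < k * density_cdf g z.
Proof.
move=> /andP[az zz0]; apply: (@ltr_Rintegral_scale _ l k h g _ a z) => //.
- exact: (density_integrable dh (measurable_itv _)).
- exact: (density_integrable dg (measurable_itv _)).
- move=> w /=; rewrite in_itv /= => wz.
  exact: crossing_le_left (le_trans wz zz0).
- by move=> w /=; rewrite !in_itv /= => /andP[_ /ltW].
- move=> w /andP[aw wz]; apply: lt_left.
  by rewrite (ltW aw) (lt_le_trans wz zz0).
Qed.

Lemma crossing_ccdf_lt z : z0 <= z < b ->
  k * (1 - density_cdf g z) < l * (1 - density_cdf h z).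
Proof.
move=> /andP[z0z zb]; rewrite /density_cdf.
rewrite -(density_setC dg) ?measurable_itv //.
rewrite -(density_setC dh) ?measurable_itv //.
apply: (@ltr_Rintegral_scale _ k l g h _ z b) => //.
- exact: (measurableC (measurable_itv _)).
- exact: (density_integrable dg (measurableC (measurable_itv _))).
- exact: (density_integrable dh (measurableC (measurable_itv _))).
- move=> w /=; rewrite in_itv /= => /negP; rewrite -ltNge => zw.
  exact: crossing_le_right (le_lt_trans z0z zw).
- by move=> w /=; rewrite !in_itv /= => /andP[zw _]; apply/negP; rewrite -ltNge.
- move=> w /andP[zw wb]; apply: lt_right.
  by rewrite (le_lt_trans z0z zw) (ltW wb).
Qed.

Lemma crossing_quantile_lt t : 0 < t < 1 ->
  Qtilde (density_cdf g) (density_cdf h) t = z0 ->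
  quantile (density_cdf g) t < quantile (density_cdf h) t.
Proof.
move=> t01 Qz0; have [t_gt0 t_lt1] := andP t01.
have [/andP[ax xb] Gx] := quantile_density_cdf dg t01.
have [/andP[ay yb] Hy] := quantile_density_cdf dh t01.
set x := quantile _ t in ax xb Gx *; set y := quantile _ t in ay yb Hy *.
rewrite ltNge; apply/negP => yx.
have /andP[yz0 z0x] : y <= z0 <= x.
  have := Qtilde_ge_min (density_cdf g) (density_cdf h) (ltW t_gt0) (ltW t_lt1).
  have := Qtilde_le_max (density_cdf g) (density_cdf h) (ltW t_gt0) (ltW t_lt1).
  by rewrite Qz0 -/x -/y (min_idPr yx) (max_idPl yx) => -> ->.
have lk : l < k.
  have lower : l * t < k * density_cdf g y.
    by rewrite -Hy; apply: crossing_cdf_lt; rewrite ay yz0.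
  have : k * density_cdf g y <= k * t.
    by rewrite -Gx (ler_wpM2l k_ge0 (density_cdf_le dg yx)).
  by move=> /(lt_le_trans lower); rewrite ltr_pM2r.
have kl : k < l.
  have upper : k * (1 - t) < l * (1 - density_cdf h x).
    by rewrite -Gx; apply: crossing_ccdf_lt; rewrite z0x xb.
  have : l * (1 - density_cdf h x) <= l * (1 - t).
    by rewrite -Hy (ler_wpM2l l_ge0 (lerB (lexx 1) (density_cdf_le dh yx))).
  by move=> /(lt_le_trans upper); rewrite ltr_pM2r // subr_gt0.
by move: (lt_trans lk kl); rewrite ltxx.
Qed.

End single_crossing.

Lemma exists_bayes_dq_region {R : realType} (pi1 pi2 : R) (g1 g2 : R -> R)
    (a b z0 : R) :
  0 < pi1 -> 0 < pi2 -> density_on g1 a b -> density_on g2 a b ->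
  a < z0 < b -> pi1 * g1 z0 = pi2 * g2 z0 ->
  ((forall z, a <= z < z0 -> pi1 * g1 z > pi2 * g2 z) /\
   (forall z, z0 < z <= b -> pi1 * g1 z < pi2 * g2 z)) \/
  ((forall z, a <= z < z0 -> pi1 * g1 z < pi2 * g2 z) /\
   (forall z, z0 < z <= b -> pi1 * g1 z > pi2 * g2 z)) ->
  exists2 t, 0 < t < 1 &
    bayes_region pi1 pi2 g1 g2 (dq_region (density_cdf g1) (density_cdf g2) t).
Proof.
move=> /ltW pi1_ge0 /ltW pi2_ge0 dg1 dg2 z0ab eq_z0 crossing.
have [t t01 Qz0] := exists_Qtilde_eq dg1 dg2 z0ab.
exists t => //; rewrite /dq_region Qz0.
case: crossing => [[left right]|[left right]].
  have q12 := crossing_quantile_lt pi1_ge0 pi2_ge0 dg1 dg2 eq_z0 left right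
    t01 Qz0.
  by rewrite (ltW q12); exact: crossing_bayes_region dg1 dg2 eq_z0 left right.
have q21 := crossing_quantile_lt pi2_ge0 pi1_ge0 dg2 dg1 (esym eq_z0) left
  right t01.
rewrite QtildeC in q21; rewrite leNgt (q21 Qz0) /=.
apply: bayes_regionC.
exact: crossing_bayes_region dg2 dg1 (esym eq_z0) left right.
Qed.

Lemma distr_fun_density {R : realType} d (T : measurableType d)
    (P : probability T R) (Z : T -> R) (g : R -> R) :
  (forall A, measurable A ->
     P (Z @^-1` A) = (\int[lebesgue_measure]_(z in A) (g z)%:E)%E) ->
  distr_fun P Z = density_cdf g.
Proof.
move=> PZ; apply/funext => z; rewrite /distr_fun /density_cdf /Rintegral.
rewrite -PZ; last exact: measurable_itv.
by congr (fine (P _)); apply/seteqP; split => t /=; rewrite in_itv.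
Qed.

Lemma density_on_law {R : realType} d (T : measurableType d)
    (P : probability T R) (Z : T -> R) (g : R -> R) (a b : R) :
  measurable_fun setT g -> a < b ->
  (forall z, a <= z <= b -> 0 < g z) ->
  (forall z, ~ (a <= z <= b) -> g z = 0) ->
  (forall A, measurable A ->
     P (Z @^-1` A) = (\int[lebesgue_measure]_(z in A) (g z)%:E)%E) ->
  density_on g a b.
Proof.
by move=> mg ab g_gt0 g_out PZ; split => //; rewrite -PZ // probability_setT.
Qed.

Theorem theorem1 (R : realType) (p : nat)
  (d1 : measure_display) (T1 : measurableType d1) (P1 : probability T1 R)
  (d2 : measure_display) (T2 : measurableType d2) (P2 : probability T2 R)
  (X1 : 'I_p -> {RV P1 >-> R}) (X2 : 'I_p -> {RV P2 >-> R})
  (u : 'rV[R]_p) (pi1 pi2 : R) (g1 g2 : R -> R) (a b z0 : R) :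
  \sum_(i < p) u ord0 i ^+ 2 = 1 ->
  0 < pi1 -> 0 < pi2 -> pi1 + pi2 = 1 ->
  (* g_k is a density of Z^(k) = u^T X^(k) *)
  measurable_fun setT g1 -> measurable_fun setT g2 ->
  (forall A : set R, measurable A ->
     P1 (proj_obs u (fun i => X1 i) @^-1` A)
     = (\int[lebesgue_measure]_(z in A) (g1 z)%:E)%E) ->
  (forall A : set R, measurable A ->
     P2 (proj_obs u (fun i => X2 i) @^-1` A)
     = (\int[lebesgue_measure]_(z in A) (g2 z)%:E)%E) ->
  (* both densities are nonzero exactly on the same compact domain [a, b] *)
  a < b ->
  (forall z, a <= z <= b -> 0 < g1 z /\ 0 < g2 z) ->
  (forall z, ~ (a <= z <= b) -> g1 z = 0 /\ g2 z = 0) ->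
  (* single crossing of pi_k g_k at an interior point z0 *)
  a < z0 < b ->
  pi1 * g1 z0 = pi2 * g2 z0 ->
  ((forall z, a <= z < z0 -> pi1 * g1 z > pi2 * g2 z) /\
   (forall z, z0 < z <= b -> pi1 * g1 z < pi2 * g2 z)) \/
  ((forall z, a <= z < z0 -> pi1 * g1 z < pi2 * g2 z) /\
   (forall z, z0 < z <= b -> pi1 * g1 z > pi2 * g2 z)) ->
  let Z1 := proj_obs u (fun i => X1 i) in
  let Z2 := proj_obs u (fun i => X2 i) in
  let err := dq_misclass pi1 pi2 (distr_fun P1 Z1) (distr_fun P2 Z2) in
  exists theta0, 0 < theta0 < 1 /\
    (forall theta, 0 < theta < 1 -> err theta0 <= err theta) /\
    err theta0 = bayes_misclass pi1 pi2 P1 Z1 P2 Z2.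
Proof.
move=> _ pi1_gt0 pi2_gt0 _ mg1 mg2 PZ1 PZ2 ab g_gt0 g_out z0ab eq_z0 crossing.
move=> Z1 Z2.
have dg1 : density_on g1 a b.
  by apply: (density_on_law mg1 ab _ _ PZ1) => z => [/g_gt0[]|/g_out[]].
have dg2 : density_on g2 a b.
  by apply: (density_on_law mg2 ab _ _ PZ2) => z => [/g_gt0[]|/g_out[]].
have cost_law A : measurable A ->
    pi1 * fine (P1 (Z1 @^-1` ~` A)) + pi2 * fine (P2 (Z2 @^-1` A)) =
    misclass_cost pi1 pi2 g1 g2 A.
  move=> mA; rewrite /misclass_cost /Rintegral PZ1 ?PZ2 //.
  exact: measurableC.
have [t t01 bayes_t] :=
  exists_bayes_dq_region pi1_gt0 pi2_gt0 dg1 dg2 z0ab eq_z0 crossing.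
have mt := measurable_dq_region (density_cdf g1) (density_cdf g2) t.
have opt := bayes_misclass_cost_le dg1 dg2 mt bayes_t.
cbv zeta; rewrite (distr_fun_density PZ1) (distr_fun_density PZ2).
exists t; rewrite !(dq_misclass_cost _ _ dg1 dg2); split=> //; split.
  move=> s _; rewrite (dq_misclass_cost _ _ dg1 dg2); apply: opt.
  exact: measurable_dq_region.
apply/esym/mem_lbound_inf => [|_ [A [mA ->]]].
  by exists (dq_region (density_cdf g1) (density_cdf g2) t); rewrite cost_law.
by rewrite cost_law //; exact: opt.
Qed.
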